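(* Fix a constant $p>0$. Let $q(k,m)$ be any function with $q(k,m)/(km)\to 0$ as $k,m\to\infty$ simultaneously. Then there is no randomized algorithm that, for every instance $M$ of the Anomalous Row Problem of size $k\times m$, probes at most $q(k,m)$ cells of $M$ and outputs the index of the anomalous row with probability at least $p$.
   Context: Anomalous Row Problem: the input is a matrix $M\in\mathbb{F}_2^{k\times m}$ (with $m\ge k+1$) such that every row except one contains exactly $k+1$ zero entries, and the remaining row (the anomalous row) contains exactly $k$ zero entries; the task is to find the anomalous row. The algorithm accesses $M$ only by probing individual cells (each probe reveals one entry). A randomized algorithm may use internal random coins; the success probability is over these coins and must hold for every valid input. *)

From HB Require Import structures.
From mathcomp Require Import all_boot all_order ssralg ssrnum matrix.
From mathcomp Require Import reals.
Set Implicit Arguments. Unset Strict Implicit. Unset Printing Implicit Defensive.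
Import Order.TTheory GRing.Theory Num.Theory.
Local Open Scope ring_scope.

(* Matrices over F_2, entries represented as booleans (false = 0, true = 1). *)
Definition zeros_in_row (k m : nat) (M : 'M[bool]_(k, m)) (i : 'I_k) : nat :=
  #|[set j : 'I_m | M i j == false]|.

Definition anomalous_row (k m : nat) (M : 'M[bool]_(k, m)) (i : 'I_k) : bool :=
  (zeros_in_row M i == k) &&
  [forall j : 'I_k, (j != i) ==> (zeros_in_row M j == k.+1)].

Definition ARP_instance (k m : nat) (M : 'M[bool]_(k, m)) : Prop :=
  (k.+1 <= m)%N /\ exists i, anomalous_row M i.

(* Deterministic adaptive probing algorithms = decision trees: an inner node
   probes cell (r, c) and branches on the revealed bit; a leaf outputs a row
   index (or None = no answer). *)
Inductive dtree (k m : nat) : Type :=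
| Leaf of option 'I_k
| Probe of 'I_k & 'I_m & dtree k m & dtree k m.  (* (r, c, if 0, if 1) *)

Fixpoint dt_output (k m : nat) (t : dtree k m) (M : 'M[bool]_(k, m)) : option 'I_k :=
  match t with
  | Leaf o => o
  | Probe r c t0 t1 => if M r c then dt_output t1 M else dt_output t0 M
  end.

Fixpoint dt_probes (k m : nat) (t : dtree k m) (M : 'M[bool]_(k, m)) : nat :=
  match t with
  | Leaf _ => 0
  | Probe r c t0 t1 => (if M r c then dt_probes t1 M else dt_probes t0 M).+1
  end.

(* A randomized algorithm: a (finitely supported) probability distribution
   over deterministic decision trees (the tree selected by the internal
   coins): outcome o : 'I_n has probability weight o and runs tree o. *)
Record rand_alg (R : realType) (k m : nat) := RandAlg {
  ra_n : nat;
  ra_weight : 'I_ra_n -> R;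
  ra_tree : 'I_ra_n -> dtree k m }.

Definition is_distribution (R : realType) (k m : nat) (A : rand_alg R k m) : Prop :=
  (forall o : 'I_(ra_n A), 0 <= @ra_weight R k m A o) /\ \sum_(o < ra_n A) @ra_weight R k m A o = 1.

Definition success_prob (R : realType) (k m : nat) (A : rand_alg R k m)
    (M : 'M[bool]_(k, m)) : R :=
  \sum_(o < ra_n A) @ra_weight R k m A o *
     (if dt_output (@ra_tree R k m A o) M is Some i then
        (if anomalous_row M i then 1 else 0) else 0).

Definition probes_at_most (R : realType) (k m : nat) (A : rand_alg R k m)
    (M : 'M[bool]_(k, m)) (Q : R) : Prop :=
  forall o : 'I_(ra_n A), 0 < @ra_weight R k m A o -> (dt_probes (@ra_tree R k m A o) M)%:R <= Q.

(* On the instances with all entries 1 except a single 0 at cell c, the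
   anomalous row is the row of c, and with at most n probes a decision tree
   sees the instance as the all-zero matrix unless c is among the first n
   cells probed on the all-zero input.  So it answers correctly on at most
   n + m of the k*m such instances, and averaging over the coins bounds the
   total success probability by q(k,m) + m, far below p*k*m for large k. *)
From HB Require Import structures.
From mathcomp Require Import all_boot all_order ssralg ssrnum matrix.
From mathcomp Require Import reals archimedean lra.
Import Order.TTheory GRing.Theory Num.Theory.
Set Implicit Arguments. Unset Strict Implicit.

Section DecisionTrees.
Variables k m : nat.

(* The entry [true] encodes a 1 of F_2, so [point_mx c] has its only zero at c. *)
Definition point_mx (c : 'I_k * 'I_m) : 'M[bool]_(k, m) :=
  \matrix_(r, s) ((r, s) == c).

Fixpoint zero_path (t : dtree k m) : seq ('I_k * 'I_m) :=
  if t is Probe r s t0 _ then (r, s) :: zero_path t0 else [::].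

Lemma dt_output_point_mx (t : dtree k m) (n : nat) (c : 'I_k * 'I_m) :
  c \notin take n (zero_path t) -> (dt_probes t (point_mx c) <= n)%N ->
  dt_output t (point_mx c) = dt_output t (const_mx false).
Proof.
elim: t n => [o|r s t0 IH0 t1 IH1] [|n] //=.
rewrite inE negb_or !mxE eq_sym => /andP[/negbTE -> c_notin].
exact: IH0.
Qed.

Lemma zeros_in_row_point_mx (c : 'I_k * 'I_m) (i : 'I_k) :
  zeros_in_row (point_mx c) i = if i == c.1 then m.-1 else m.
Proof.
rewrite /zeros_in_row; case: c => [a b] /=.
have [->|i_neq_a] := eqVneq i a.
  rewrite -[m in RHS]card_ord -(cardsC1 b); apply: eq_card => j.
  by rewrite !inE mxE xpair_eqE eqxx eqbF_neg.
rewrite -[m in RHS]card_ord -cardsT; apply: eq_card => j.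
by rewrite !inE mxE xpair_eqE (negbTE i_neq_a).
Qed.

Local Open Scope nat_scope.

Lemma sum_correct_point_mx_le (t : dtree k m) (n : nat) :
  (forall c, dt_probes t (point_mx c) <= n) ->
  \sum_(c : 'I_k * 'I_m) (dt_output t (point_mx c) == Some c.1) <= n + m.
Proof.
move=> probes_le; set s := take n (zero_path t).
set o0 := dt_output t (const_mx false).
have correct_le c :
    (dt_output t (point_mx c) == Some c.1) <= (c \in s) + (o0 == Some c.1).
  have [//|c_notin] := boolP (c \in s); first by case: (_ == _).
  by rewrite (dt_output_point_mx c_notin (probes_le c)).
apply: leq_trans (_ : _ <= \sum_c ((c \in s) + (o0 == Some c.1))) _.
  by apply: leq_sum => c _; apply: correct_le.
rewrite big_split /=; apply: leq_add.
  rewrite (eq_bigr (fun c => if c \in s then 1 else 0)) => [|c _]; last first.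
    by case: (c \in s).
  rewrite -big_mkcond sum1_card; apply: leq_trans (card_size s) _.
  by rewrite size_take_min geq_minl.
rewrite -(pair_bigA _ (fun a _ => (o0 == Some a) : nat)) /=.
under eq_bigr do rewrite sum_nat_const card_ord.
rewrite -big_distrr /= -[leqRHS]muln1 leq_mul2l; apply/orP; right.
clear correct_le; case: o0 => [i|]; last by rewrite big1.
rewrite (bigD1 i) //= eqxx big1 // => j.
by rewrite -[Some i == Some j]/(i == j) eq_sym => /negbTE ->.
Qed.

End DecisionTrees.

Section SquareInstances.
Variable k : nat.

Lemma anomalous_row_point_mx (c : 'I_k * 'I_k.+1) (i : 'I_k) :
  anomalous_row (point_mx c) i = (i == c.1).
Proof.
rewrite /anomalous_row zeros_in_row_point_mx /=.
have [->|i_neq] := eqVneq i c.1; last by rewrite eqn_leq ltnn.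
rewrite eqxx; apply/forallP => j; apply/implyP => /negbTE j_neq.
by rewrite zeros_in_row_point_mx j_neq.
Qed.

Lemma ARP_instance_point_mx (c : 'I_k * 'I_k.+1) : ARP_instance (point_mx c).
Proof. by split=> //; exists c.1; rewrite anomalous_row_point_mx. Qed.

Local Open Scope ring_scope.
Variable R : realType.

Lemma success_prob_point_mx (A : rand_alg R k k.+1) (c : 'I_k * 'I_k.+1) :
  success_prob A (point_mx c) =
  \sum_(o < ra_n A) ra_weight o *
     (dt_output (ra_tree o) (point_mx c) == Some c.1)%:R.
Proof.
apply: eq_bigr => o _; congr (_ * _).
case: (dt_output _ _) => [i|] //=; rewrite anomalous_row_point_mx.
by rewrite -[Some i == Some c.1]/(i == c.1); case: (i == c.1).
Qed.

Lemma sum_success_prob_point_mx_le (A : rand_alg R k k.+1) (Q : R) :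
  (0 < k)%N -> is_distribution A ->
  (forall c, probes_at_most A (point_mx c) Q) ->
  \sum_(c : 'I_k * 'I_k.+1) success_prob A (point_mx c) <= Q + k.+1%:R.
Proof.
move=> k_gt0 [w_ge0 w_sum1] probes_le.
under eq_bigr do rewrite success_prob_point_mx.
rewrite exchange_big /=.
apply: le_trans (_ : _ <= \sum_(o < ra_n A) ra_weight o * (Q + k.+1%:R)) _; last first.
  by rewrite -mulr_suml w_sum1 mul1r.
apply: ler_sum => o _; rewrite -mulr_sumr.
have [w_gt0|w_le0] := ltP 0 (ra_weight o); last first.
  by rewrite (@le_anti _ _ (ra_weight o) 0) ?w_le0 ?w_ge0 ?mul0r.
rewrite ler_pM2l // -natr_sum.
pose n := \max_(c : 'I_k * 'I_k.+1) dt_probes (ra_tree o) (point_mx c).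
have [c0 n_eq] : {c0 | n = dt_probes (ra_tree o) (point_mx c0)}.
  by apply: bigop.eq_bigmax; rewrite card_prod !card_ord muln_gt0 k_gt0.
apply: le_trans (_ : (n + k.+1)%:R <= _).
  by rewrite ler_nat sum_correct_point_mx_le // => c; apply: leq_bigmax.
by rewrite natrD lerD2r n_eq probes_le.
Qed.

End SquareInstances.

Local Open Scope ring_scope.

Theorem theorem3 (R : realType) (p : R) (q : nat -> nat -> R) :
  0 < p ->
  (forall eps : R, 0 < eps -> exists N : nat, forall k m : nat,
       (N <= k)%N -> (N <= m)%N -> `|q k m / (k * m)%:R| <= eps) ->
  ~ exists A : forall k m : nat, rand_alg R k m,
      forall k m : nat,
        is_distribution (A k m) /\
        forall M : 'M[bool]_(k, m), ARP_instance M ->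
          probes_at_most (A k m) M (q k m) /\ p <= success_prob (A k m) M.
Proof.
move=> p_gt0 q_small [A A_solves].
have [N q_le] := q_small _ (divr_gt0 p_gt0 (ltr0n R 3)).
pose B := Num.Def.archi_bound (3 / p).
have B_gt : 3 / p < B%:R by apply: archi_boundP; rewrite ltW // divr_gt0.
pose k := (maxn N B).+1.
have N_le_k : (N <= k)%N by rewrite ltnW // ltnS leq_maxl.
have B_le_k : (B <= k)%N by rewrite ltnW // ltnS leq_maxr.
have [distrA solvesA] := A_solves k k.+1.
have total_ge : p *+ (k * k.+1) <=
    \sum_(c : 'I_k * 'I_k.+1) success_prob (A k k.+1) (point_mx c).
  have -> : (k * k.+1)%N = #|{: 'I_k * 'I_k.+1}| by rewrite card_prod !card_ord.
  rewrite -sumr_const; apply: ler_sum => c _.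
  by have [_ ->] := solvesA _ (ARP_instance_point_mx c).
have total_le := sum_success_prob_point_mx_le (ltn0Sn _) distrA
  (fun c => (solvesA _ (ARP_instance_point_mx c)).1).
have q_le_km : q k k.+1 <= p / 3 * (k * k.+1)%:R.
  rewrite -ler_pdivrMr ?ltr0n ?muln_gt0 //; apply: le_trans (ler_norm _) _.
  by apply: q_le; rewrite // (leq_trans N_le_k).
have pk_gt3 : 3 < k%:R * p.
  rewrite -ltr_pdivrMr //; apply: lt_le_trans B_gt _.
  by rewrite ler_nat.
move: total_ge total_le q_le_km pk_gt3.
rewrite -mulr_natr !natrM -addn1 natrD.
have : 0 < k%:R :> R by rewrite ltr0n.
nra.
Qed.
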